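(* Let $1\le p\le q<\infty$ and $k\in\mathbb{N}$. Let $\mathsf{M}_{p,q}(k)$ denote the least constant such that for every $n\ge k$, every function $f:\{-1,1\}^n\to\mathbb{R}$ of degree at most $k$ satisfies $\|f\|_q\le \mathsf{M}_{p,q}(k)\|f\|_p$. Then $\mathsf{M}_{p,q}(k)$ is also the least constant such that for every $n\ge k$, every function $f:\{-1,1\}^n\to\mathbb{R}$ satisfies $$\inf_{g\in \mathscr{P}^n_{>k}} \|f-g\|_{p^\ast} \leq \mathsf{M}_{p,q}(k) \inf_{g\in \mathscr{P}^n_{>k}} \|f-g\|_{q^\ast},$$ where for $r\in[1,\infty]$ the conjugate exponent $r^\ast$ is defined by $\frac1{r^\ast}+\frac1r=1$.
   Context: Every $f:\{-1,1\}^n\to\mathbb{R}$ has a unique Fourier–Walsh expansion $f=\sum_{S\subseteq\{1,\dots,n\}}\widehat f(S)w_S$, where $w_S(x)=\prod_{i\in S}x_i$. $f$ has degree at most $k$ if $\widehat f(S)=0$ whenever $|S|>k$. The $k$-th tail space is $\mathscr{P}^n_{>k}=\{f:\{-1,1\}^n\to\mathbb{R}:\ \widehat f(S)=0 \text{ whenever } |S|\le k\}$. For $r\in[1,\infty]$, $\|\cdot\|_r$ denotes the $L_r$ norm on $\{-1,1\}^n$ with respect to the uniform probability measure. *)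

From mathcomp Require Import all_boot all_order all_algebra.
From mathcomp Require Import all_classical all_reals all_analysis.
Set Implicit Arguments. Unset Strict Implicit. Unset Printing Implicit Defensive.
Import Order.TTheory GRing.Theory Num.Theory.
Local Open Scope ring_scope.
Local Open Scope classical_set_scope.

Section Cube.
Variable R : realType.

(* The discrete cube {-1,1}^n: x i = true encodes x_i = -1, false encodes 1. *)
Definition cube (n : nat) := {ffun 'I_n -> bool}.

Definition chi (n : nat) (x : cube n) (i : 'I_n) : R := if x i then -1 else 1.

Definition walsh (n : nat) (S : {set 'I_n}) (x : cube n) : R :=
  \prod_(i in S) chi x i.

Definition expect (n : nat) (f : cube n -> R) : R :=
  (\sum_(x : cube n) f x) / (2 ^+ n).

Definition fourier (n : nat) (f : cube n -> R) (S : {set 'I_n}) : R :=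
  expect (fun x => f x * walsh S x).

Definition degree_le (k n : nat) (f : cube n -> R) : Prop :=
  forall S : {set 'I_n}, (k < #|S|)%N -> fourier f S = 0.

Definition tail_space (k n : nat) (f : cube n -> R) : Prop :=
  forall S : {set 'I_n}, (#|S| <= k)%N -> fourier f S = 0.

Definition cube_norm (n : nat) (r : \bar R) (f : cube n -> R) : R :=
  match r with
  | EFin r => powR (expect (fun x => powR `|f x| r)) r^-1
  | EPInf => \big[Num.max/0]_(x : cube n) `|f x|
  | ENInf => 0
  end.

(* conjugate exponent r^* with 1/r^* + 1/r = 1, for r in [1, oo) *)
Definition conj_exp (r : R) : \bar R :=
  if r == 1 then +oo%E else (r / (r - 1))%:E.

Definition dist_tail (n : nat) (r : \bar R) (k : nat) (f : cube n -> R) : R :=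
  inf [set cube_norm r (fun x => f x - g x) | g in @tail_space k n].

Definition is_least_const (P : R -> Prop) (M : R) : Prop :=
  P M /\ forall C, P C -> M <= C.

End Cube.

From mathcomp Require Import all_boot all_order all_algebra.
From mathcomp Require Import all_classical all_reals all_analysis.
From mathcomp Require Import ring lra.
Set Implicit Arguments. Unset Strict Implicit. Unset Printing Implicit Defensive.
Import Order.TTheory GRing.Theory Num.Theory.
Local Open Scope ring_scope.

(* For h of degree at most k and t in the tail space, E[f h] = E[(f - t) h]
   because the Walsh functions are orthonormal, so Hölder's inequality gives
   E[f h] <= dist_{r*}(f, P_{>k}) ||h||_r.  Conversely, the functional
   t + c f |-> c dist_{p*}(f, P_{>k}) on the span of P_{>k} and f is dominated
   by ||.||_{p*}; a Hahn-Banach extension of it is of the form g |-> E[g h] with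
   h of degree at most k, ||h||_p <= 1 and E[f h] = dist_{p*}(f, P_{>k}).
   Hence dist_{r*}(., P_{>k}) is the norm dual to ||.||_r on functions of degree
   at most k, so ||h||_q <= C ||h||_p for all such h if and only if
   dist_{p*} <= C dist_{q*} everywhere, and the least constants coincide. *)

Section Subspace.
Variables (R : realType) (V : lmodType R).
Implicit Types (W : set V) (phi : V -> R).

Definition subspace W := W 0 /\ forall c u v, W u -> W v -> W (c *: u + v).

Definition linear_on W phi :=
  forall c u v, W u -> W v -> phi (c *: u + v) = c * phi u + phi v.

Definition spanning (I : finType) (F : I -> V) :=
  forall W, subspace W -> (forall i, W (F i)) -> forall u, W u.

Lemma subspaceZ W c u : subspace W -> W u -> W (c *: u).
Proof. by case=> W0 WL Wu; rewrite -[c *: u]addr0; apply: WL. Qed.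

Lemma subspace_sum W (I : Type) (s : seq I) (a : I -> R) (F : I -> V) :
  subspace W -> (forall i, W (F i)) -> W (\sum_(i <- s) a i *: F i).
Proof.
case=> W0 WL WF; elim: s => [|i s IHs]; first by rewrite big_nil.
by rewrite big_cons; apply: WL.
Qed.

Lemma linear_on0 W phi : subspace W -> linear_on W phi -> phi 0 = 0.
Proof.
by case=> W0 _ L; have := L 1 0 0 W0 W0; rewrite scale1r addr0 mul1r => ?; lra.
Qed.

Lemma linear_onZ W phi c u :
  subspace W -> linear_on W phi -> W u -> phi (c *: u) = c * phi u.
Proof.
move=> SW L Wu; have [W0 _] := SW.
by rewrite -[c *: u]addr0 L // (linear_on0 SW L) addr0.
Qed.

Lemma linear_sum phi (I : Type) (s : seq I) (a : I -> R) (F : I -> V) :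
  (forall c u v, phi (c *: u + v) = c * phi u + phi v) ->
  phi (\sum_(i <- s) a i *: F i) = \sum_(i <- s) a i * phi (F i).
Proof.
move=> L; have Lon : linear_on setT phi by move=> c u v _ _; apply: L.
elim: s => [|i s IHs]; first by rewrite !big_nil (linear_on0 _ Lon).
by rewrite !big_cons L IHs.
Qed.

End Subspace.

Section HahnBanach.
Variables (R : realType) (V : lmodType R).
Implicit Types (W : set V) (phi : V -> R).
Local Open Scope classical_set_scope.

Variable rho : V -> R.
Hypothesis rhoD : forall u v, rho (u + v) <= rho u + rho v.
Hypothesis rhoZ : forall c u, 0 < c -> rho (c *: u) = c * rho u.

Lemma rho0 : rho 0 = 0.
Proof. by have := rhoZ 0 (ltr0Sn _ 1); rewrite scaler0 => ?; lra. Qed.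

Lemma rhoZD c u w : 0 < c -> c * rho (u + c^-1 *: w) = rho (c *: u + w).
Proof.
move=> c_gt0; rewrite -rhoZ // scalerDr scalerA mulfV ?scale1r //.
by rewrite gt_eqF.
Qed.

Definition dominated_linear W phi :=
  [/\ subspace W, linear_on W phi & forall u, W u -> phi u <= rho u].

Definition extends W phi W' phi' := forall u, W u -> W' u /\ phi' u = phi u.

Section ExtensionStep.
Variables (W : set V) (phi : V -> R) (v : V) (c0 : R).
Hypothesis domW : dominated_linear W phi.
Hypothesis c0_bounds : forall c w, W w -> phi w + c * c0 <= rho (c *: v + w).

Let SW : subspace W. Proof. by case: domW. Qed.
Let LW : linear_on W phi. Proof. by case: domW. Qed.

Lemma extension_value_in_subspace : W v -> phi v = c0.
Proof.
move=> Wv; have [W0 WL] := SW.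
have WNv : W (- v) by rewrite -scaleN1r; apply: subspaceZ.
have phiN : phi (- v) = - phi v by rewrite -scaleN1r (linear_onZ _ SW LW) // mulN1r.
have := c0_bounds 1 WNv; have := c0_bounds (-1) Wv.
by rewrite scale1r scaleN1r addNr subrr rho0 phiN => ? ?; lra.
Qed.

Section NotInSubspace.
Hypothesis vNW : ~ W v.

Let span_add (u : V) := exists cw : R * V, W cw.2 /\ u = cw.1 *: v + cw.2.

Let span_add_coord_uniq c1 c2 w1 w2 :
  W w1 -> W w2 -> c1 *: v + w1 = c2 *: v + w2 -> c1 = c2 /\ w1 = w2.
Proof.
move=> W1 W2 E; have [W0 WL] := SW.
have [c12|c12] := eqVneq c1 c2.
  by move: E; rewrite c12 => /addrI.
exfalso; apply: vNW.
have -> : v = (c1 - c2)^-1 *: ((-1) *: w1 + w2).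
  apply: (@scalerI _ _ (c1 - c2)); first by rewrite subr_eq0.
  rewrite scalerA mulfV ?subr_eq0 // scale1r scaleN1r scalerBl.
  by apply/eqP; rewrite subr_eq -addrA (addrC w2) -E (addrC _ w1) addKr.
by apply: subspaceZ => //; apply: WL.
Qed.

Let extended (u : V) : R :=
  if pselect (span_add u) is left H then
    let cw := projT1 (cid H) in phi cw.2 + cw.1 * c0
  else 0.

Let extendedE c w : W w -> extended (c *: v + w) = phi w + c * c0.
Proof.
move=> Ww; rewrite /extended; case: pselect => [H|[]]; last by exists (c, w).
case: (cid H) => [[c' w'] /= [W' E]].
by have [-> ->] := span_add_coord_uniq W' Ww (esym E).
Qed.

Let dominated_extended : dominated_linear span_add extended.
Proof.
have [W0 WL] := SW.
have comb c c1 c2 w1 w2 : c *: (c1 *: v + w1) + (c2 *: v + w2) =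
    (c * c1 + c2) *: v + (c *: w1 + w2).
  by rewrite scalerDr scalerA addrACA -scalerDl.
split; first split.
- by exists (0, 0); rewrite /= scale0r addr0.
- move=> c _ _ [[c1 w1] /= [W1 ->]] [[c2 w2] /= [W2 ->]].
  by exists (c * c1 + c2, c *: w1 + w2); split; [apply: WL | apply: comb].
- move=> c _ _ [[c1 w1] /= [W1 ->]] [[c2 w2] /= [W2 ->]].
  by rewrite comb !extendedE ?LW //; [ring | apply: WL].
- by move=> _ [[c w] /= [Ww ->]]; rewrite extendedE //; apply: c0_bounds.
Qed.

Lemma extension_step_outside : exists W' phi',
  [/\ dominated_linear W' phi', extends W phi W' phi', W' v & phi' v = c0].
Proof.
have [W0 _] := SW.
exists span_add, extended; split; first exact: dominated_extended.
- move=> u Wu; have E : 0 *: v + u = u by rewrite scale0r add0r.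
  split; first by exists (0, u).
  by rewrite -{1}E extendedE // mul0r addr0.
- by exists (1, 0); rewrite /= scale1r addr0.
- by rewrite -[v]addr0 -{1}[v]scale1r extendedE // (linear_on0 SW LW) add0r mul1r.
Qed.

End NotInSubspace.

Lemma extension_step : exists W' phi',
  [/\ dominated_linear W' phi', extends W phi W' phi', W' v & phi' v = c0].
Proof.
have [Wv|vNW] := pselect (W v); last exact: extension_step_outside.
by exists W, phi; split; [| move=> u | | apply: extension_value_in_subspace].
Qed.

End ExtensionStep.

Lemma extension_constant_exists W phi v : dominated_linear W phi ->
  exists c0, forall c w, W w -> phi w + c * c0 <= rho (c *: v + w).
Proof.
move=> [SW LW DW]; have [W0 WL] := SW.
(* sublinearity puts each lower bound phi w' - rho (w' - v) below each upper
   bound rho (v + w) - phi w, so c0 := inf of the upper bounds works *)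
pose S := [set rho (v + w) - phi w | w in W].
have sep w w' : W w -> W w' -> phi w' - rho (- v + w') <= rho (v + w) - phi w.
  move=> Ww Ww'; have := DW _ (WL 1 w w' Ww Ww'); rewrite LW // scale1r mul1r.
  have -> : w + w' = (v + w) + (- v + w') by rewrite addrACA subrr add0r.
  by have := rhoD (v + w) (- v + w'); lra.
have S_lb : has_lbound S.
  by exists (phi 0 - rho (- v + 0)) => _ [w Ww <-]; apply: sep.
have S_n0 : S !=set0 by exists (rho (v + 0) - phi 0), 0.
have le_inf w : W w -> phi w - rho (- v + w) <= inf S.
  by move=> Ww; apply: lb_le_inf => // _ [w' Ww' <-]; apply: sep.
have inf_le w : W w -> inf S <= rho (v + w) - phi w.
  by move=> Ww; apply: (ge_inf S_lb); exists w.
exists (inf S) => c w Ww.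
have phiZV d : d != 0 -> d * phi (d^-1 *: w) = phi w.
  by move=> d0; rewrite (linear_onZ _ SW LW) // mulrA mulfV ?mul1r.
have [c_lt0|c_gt0|->] := ltgtP c 0.
- have Nc_gt0 : 0 < - c by rewrite oppr_gt0.
  have := ler_wpM2l (ltW Nc_gt0) (le_inf _ (subspaceZ (- c)^-1 SW Ww)).
  rewrite mulrBr rhoZD // phiZV ?oppr_eq0 ?lt_eqF // scalerN scaleNr opprK.
  by move=> ?; lra.
- have := ler_wpM2l (ltW c_gt0) (inf_le _ (subspaceZ c^-1 SW Ww)).
  by rewrite mulrBr rhoZD // phiZV ?gt_eqF // => ?; lra.
- by rewrite mul0r addr0 scale0r add0r; apply: DW.
Qed.

Lemma extends_trans W1 phi1 W2 phi2 W3 phi3 :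
  extends W1 phi1 W2 phi2 -> extends W2 phi2 W3 phi3 -> extends W1 phi1 W3 phi3.
Proof.
move=> E12 E23 u W1u; have [W2u <-] := E12 u W1u.
exact: E23.
Qed.

Lemma extension_to_seq (I : eqType) (F : I -> V) (s : seq I) W phi :
  dominated_linear W phi -> exists W' phi',
  [/\ dominated_linear W' phi', extends W phi W' phi' & forall i, i \in s -> W' (F i)].
Proof.
elim: s W phi => [|i s IHs] W phi domW.
  by exists W, phi; split => // u Wu.
have [c0 c0_bounds] := extension_constant_exists (F i) domW.
have [W1 [phi1 [dom1 E1 W1i _]]] := extension_step domW c0_bounds.
have [W2 [phi2 [dom2 E2 W2s]]] := IHs W1 phi1 dom1.
exists W2, phi2; split => //; first exact: extends_trans E2.
move=> j; rewrite in_cons => /predU1P[->|]; last exact: W2s.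
by have [] := E2 _ W1i.
Qed.

Theorem hahn_banach (I : finType) (F : I -> V) W phi :
  spanning F -> dominated_linear W phi -> exists psi : V -> R,
  [/\ forall c u v, psi (c *: u + v) = c * psi u + psi v,
      forall u, psi u <= rho u & forall u, W u -> psi u = phi u].
Proof.
move=> spanF domW.
have [W' [psi [[SW' LW' DW'] E WF]]] := extension_to_seq F (enum I) domW.
have W'T u : W' u by apply: spanF => // i; apply: WF; rewrite mem_enum.
by exists psi; split => [c u v|u|u /E[]//]; [apply: LW' | apply: DW'].
Qed.

End HahnBanach.

Section Expectation.
Variables (R : realType) (n : nat).
Implicit Types f g : cube n -> R.

Lemma cube_size_gt0 : 0 < (2 : R) ^+ n.
Proof. by rewrite exprn_gt0. Qed.

Lemma eq_expect f g : f =1 g -> expect f = expect g.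
Proof. by move=> fg; rewrite /expect; congr (_ / _); apply: eq_bigr. Qed.

Lemma expect_cst (c : R) : expect (fun _ : cube n => c) = c.
Proof.
rewrite /expect sumr_const card_ffun card_bool card_ord -[c *+ _]mulr_natr natrX.
by rewrite mulfK // gt_eqF // cube_size_gt0.
Qed.

Lemma expectD f g : expect (fun x => f x + g x) = expect f + expect g.
Proof. by rewrite /expect big_split /= mulrDl. Qed.

Lemma expectZ (a : R) f : expect (fun x => a * f x) = a * expect f.
Proof. by rewrite /expect -mulr_sumr mulrA. Qed.

Lemma expectB f g : expect (fun x => f x - g x) = expect f - expect g.
Proof. by rewrite expectD /expect sumrN mulNr. Qed.

Lemma expect_sum (I : finType) (F : I -> cube n -> R) :
  expect (fun x => \sum_i F i x) = \sum_i expect (F i).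
Proof. by rewrite /expect exchange_big /= mulr_suml. Qed.

Lemma ler_expect f g : (forall x, f x <= g x) -> expect f <= expect g.
Proof.
move=> fg; rewrite /expect ler_pM2r ?invr_gt0 ?cube_size_gt0 //.
by apply: ler_sum => x _.
Qed.

Lemma expect_ge0 f : (forall x, 0 <= f x) -> 0 <= expect f.
Proof. by move=> f0; rewrite -(expect_cst 0); apply: ler_expect. Qed.

Lemma expect_eq0 f : (forall x, 0 <= f x) -> expect f = 0 -> forall x, f x = 0.
Proof.
move=> f0 /eqP; rewrite /expect mulf_eq0 invr_eq0 (gt_eqF cube_size_gt0) orbF.
by rewrite psumr_eq0 => [/allP/(_ _ (mem_index_enum _))/implyP/(_ isT)/eqP|y _].
Qed.

End Expectation.

Section Fourier.
Variables (R : realType) (n : nat) (k : nat).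
Implicit Types (f g t : cube n -> R) (S T : {set 'I_n}).

Definition bit_sign (b : bool) : R := if b then -1 else 1.

Lemma bit_signK b : bit_sign b * bit_sign b = 1.
Proof. by case: b; rewrite /bit_sign ?mulrNN mulr1. Qed.

Lemma expect_walshM S T :
  expect (fun x => walsh R S x * walsh R T x) = (S == T)%:R.
Proof.
pose F i b := (if i \in S then bit_sign b else 1) * (if i \in T then bit_sign b else 1).
have -> : (fun x => walsh R S x * walsh R T x) = fun x : cube n => \prod_i F i (x i).
  by apply: funext => x; rewrite /walsh !(big_mkcond (fun i => i \in _)) -big_split.
rewrite /expect -(bigA_distr_bigA F) /=.
have [eST|neST] := eqVneq S T.
  have F1 i b : F i b = 1 by rewrite /F eST; case: ifP; rewrite ?bit_signK ?mulr1.
  under eq_bigr do under eq_bigr do rewrite F1.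
  rewrite prodr_const card_ord sumr_const card_bool -natrX.
  by rewrite divff // gt_eqF // cube_size_gt0.
have [i STi] : exists i, (i \in S) != (i \in T).
  apply/existsP; apply: contraR neST => /existsPn ST.
  by apply/eqP/setP => i; apply/eqP/negbNE.
rewrite (bigD1 i) //= big_bool /F /bit_sign.
by move: STi; case: (i \in S); case: (i \in T); rewrite //= ?mulr1 ?mul1r addNr !mul0r.
Qed.

Lemma sum_walshM (x y : cube n) :
  \sum_S walsh R S x * walsh R S y = (x == y)%:R * 2 ^+ n.
Proof.
rewrite (eq_bigr (fun S => \prod_i (if i \in S then chi R x i * chi R y i else 1)));
  last by move=> S _; rewrite /walsh -big_split big_mkcond.
rewrite -(bigA_distr 1 +%R (fun i => chi R x i * chi R y i) (fun=> 1)) /=.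
have [<-|nxy] := eqVneq x y.
  under eq_bigr do rewrite [chi _ _ _ * _]bit_signK.
  by rewrite prodr_const card_ord mul1r.
have [i xyi] : exists i, x i != y i.
  apply/existsP; apply: contraR nxy => /existsPn xy.
  by apply/eqP/ffunP => i; apply/eqP/negbNE.
rewrite (bigD1 i) //= mul0r /chi.
by move: xyi; case: (x i); case: (y i); rewrite //= ?mulN1r ?mulr1 ?mul1r ?addNr ?mul0r.
Qed.

Lemma fourier_inversion f y : f y = \sum_S fourier f S * walsh R S y.
Proof.
rewrite /fourier; under eq_bigr do rewrite mulrC -expectZ.
rewrite -expect_sum (eq_expect (g := fun x => f x * ((x == y)%:R * 2 ^+ n))); last first.
  move=> x; rewrite -sum_walshM mulr_sumr; apply: eq_bigr => S _.
  by rewrite mulrCA [walsh R S y * _]mulrC.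
rewrite /expect (bigD1 y) //= big1 => [|x /negbTE ->]; last by rewrite mul0r mulr0.
by rewrite eqxx mul1r addr0 mulfK // gt_eqF // cube_size_gt0.
Qed.

Lemma fourierD f g S : fourier (fun x => f x + g x) S = fourier f S + fourier g S.
Proof. by rewrite /fourier -expectD; apply: eq_expect => x; rewrite mulrDl. Qed.

Lemma fourierZ (a : R) f S : fourier (fun x => a * f x) S = a * fourier f S.
Proof. by rewrite /fourier -expectZ; apply: eq_expect => x; rewrite mulrA. Qed.

Lemma tail_space_subspace : subspace (@tail_space R k n).
Proof.
split => [S _|c u v tu tv S kS]; last by rewrite fourierD fourierZ tu ?tv ?mulr0 ?addr0.
by rewrite /fourier (eq_expect (g := fun _ => 0)) ?expect_cst // => x; rewrite mul0r.
Qed.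

Lemma tail_space_walsh S : (k < #|S|)%N -> tail_space k (walsh R S).
Proof.
move=> kS T kT; rewrite /fourier expect_walshM.
by case: eqP => // ST; move: kS; rewrite ST ltnNge kT.
Qed.

Lemma degree_le_cst1 : degree_le k (fun _ : cube n => 1 : R).
Proof.
move=> S kS; rewrite /fourier.
rewrite (eq_expect (g := fun x => walsh R S x * walsh R finset.set0 x)).
  by rewrite expect_walshM; case: eqP => // S0; rewrite S0 cards0 in kS.
by move=> x; rewrite /walsh big_set0 mul1r mulr1.
Qed.

Lemma expect_degree_tailM f t : degree_le k f -> tail_space k t ->
  expect (fun x => f x * t x) = 0.
Proof.
move=> df tt.
rewrite (eq_expect (g := fun x => \sum_S fourier f S * (walsh R S x * t x))); last first.
  move=> x; rewrite {1}fourier_inversion mulr_suml.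
  by apply: eq_bigr => S _; rewrite mulrA.
rewrite expect_sum big1 // => S _; rewrite expectZ.
have [kS|kS] := leqP #|S| k; last by rewrite df // mul0r.
have := tt S kS; rewrite /fourier => tS.
rewrite (eq_expect (f := fun x => walsh R S x * t x) (g := fun x => t x * walsh R S x)).
  by rewrite tS mulr0.
by move=> x; rewrite mulrC.
Qed.

End Fourier.

Section Exponents.
Variable R : realType.
Implicit Types a b r : R.

Lemma powRV a b : 0 <= a -> powR a^-1 b = (powR a b)^-1.
Proof. by move=> a_ge0; rewrite -powR_inv1 // -powRrM mulN1r powRN. Qed.

Lemma subr1_mul_conjugate a b : 0 < a -> 0 < b -> a^-1 + b^-1 = 1 -> (a - 1) * b = a.
Proof.
move=> a_gt0 b_gt0 ab; have : a + b = a * b * (a^-1 + b^-1) by field; rewrite !gt_eqF.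
by rewrite ab mulr1 mulrBl mul1r => <-; rewrite addrK.
Qed.

Lemma young_scaled a b A B x y : 0 < a -> 0 < b -> a^-1 + b^-1 = 1 ->
  0 < A -> 0 < B -> 0 <= x -> 0 <= y ->
  x * y <= A * B * ((b * powR A b)^-1 * powR x b + (a * powR B a)^-1 * powR y a).
Proof.
move=> a_gt0 b_gt0 ab A_gt0 B_gt0 x_ge0 y_ge0.
have -> : x * y = A * B * ((x / A) * (y / B)) by field; rewrite !gt_eqF.
rewrite ler_pM2l ?mulr_gt0 //.
have xA : 0 <= x / A by rewrite divr_ge0 // ltW.
have yB : 0 <= y / B by rewrite divr_ge0 // ltW.
apply: le_trans (conjugate_powR xA yB b_gt0 a_gt0 _) _; first by rewrite addrC.
rewrite !powRM ?invr_ge0 ?(ltW A_gt0) ?(ltW B_gt0) // !powRV ?(ltW A_gt0) ?(ltW B_gt0) //.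
by rewrite le_eqVlt; apply/orP; left; apply/eqP; field; rewrite !gt_eqF ?powR_gt0.
Qed.

Lemma conj_expP r : 1 <= r ->
  (r = 1 /\ conj_exp r = +oo%E) \/ (1 < r /\ conj_exp r = (r / (r - 1))%:E).
Proof.
rewrite /conj_exp le_eqVlt => /orP[/eqP <-|r_gt1]; first by left; rewrite eqxx.
by right; rewrite gt_eqF.
Qed.

Lemma conj_exp_gt0 r : 1 < r -> 0 < r / (r - 1).
Proof. by move=> r_gt1; rewrite divr_gt0 //; lra. Qed.

Lemma conj_exp_inv r : 1 < r -> r^-1 + (r / (r - 1))^-1 = 1.
Proof.
move=> r_gt1; have r0 : r != 0 by rewrite gt_eqF //; lra.
have r10 : r - 1 != 0 by rewrite gt_eqF //; lra.
by field; rewrite r0 r10.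
Qed.

End Exponents.

Section Norms.
Variables (R : realType) (n : nat).
Implicit Types (g h : cube n -> R) (a b r : R).

Lemma cube_norm_ge0 (r : \bar R) h : 0 <= cube_norm r h.
Proof.
case: r => [r||] //=; first exact: powR_ge0.
by apply: le_trans (le_bigmax _ _ [ffun=> false]); apply: normr_ge0.
Qed.

Lemma cube_norm_oo_ub h x : `|h x| <= cube_norm +oo%E h.
Proof. exact: le_bigmax. Qed.

Lemma cube_normX r h : 0 < r ->
  powR (cube_norm r%:E h) r = expect (fun x => powR `|h x| r).
Proof.
move=> r_gt0; rewrite /= -powRrM mulVf ?gt_eqF // powRr1 //.
by apply: expect_ge0 => x; apply: powR_ge0.
Qed.

Lemma cube_norm_eq0 r h : 0 < r -> cube_norm r%:E h = 0 -> forall x, h x = 0.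
Proof.
move=> r_gt0 /powR_eq0_eq0 /(expect_eq0 (fun x => powR_ge0 _ _)) h0 x.
exact/normr0_eq0/powR_eq0_eq0/h0.
Qed.

Lemma cube_norm_cst r (c : R) : 0 < r -> cube_norm r%:E (fun _ : cube n => c) = `|c|.
Proof. by move=> r_gt0; rewrite /= expect_cst -powRrM mulfV ?gt_eqF ?powRr1. Qed.

Lemma cube_norm1 h : cube_norm 1%:E h = expect (fun x => `|h x|).
Proof.
rewrite /= invr1 powRr1; last by apply: expect_ge0 => x; apply: powR_ge0.
by apply: eq_expect => x; rewrite powRr1.
Qed.

Lemma holder_conjugate a b g h : 0 < a -> 0 < b -> a^-1 + b^-1 = 1 ->
  expect (fun x => `|g x| * `|h x|) <= cube_norm b%:E g * cube_norm a%:E h.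
Proof.
move=> a_gt0 b_gt0 ab.
have [A0|A0] := eqVneq (cube_norm b%:E g) 0.
  rewrite A0 mul0r (eq_expect (g := fun _ => 0)) ?expect_cst // => x.
  by rewrite (cube_norm_eq0 b_gt0 A0) normr0 mul0r.
have [B0|B0] := eqVneq (cube_norm a%:E h) 0.
  rewrite B0 mulr0 (eq_expect (g := fun _ => 0)) ?expect_cst // => x.
  by rewrite (cube_norm_eq0 a_gt0 B0) normr0 mulr0.
have gX := cube_normX g b_gt0; have hX := cube_normX h a_gt0.
move: A0 B0 gX hX; set A := cube_norm _ g; set B := cube_norm _ h => A0 B0 gX hX.
have A_gt0 : 0 < A by rewrite lt_def A0 cube_norm_ge0.
have B_gt0 : 0 < B by rewrite lt_def B0 cube_norm_ge0.
clearbody A B.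
have young x :=
  young_scaled a_gt0 b_gt0 ab A_gt0 B_gt0 (normr_ge0 (g x)) (normr_ge0 (h x)).
apply: le_trans (ler_expect young) _.
rewrite expectZ expectD !expectZ -gX -hX.
have -> : (b * powR A b)^-1 * powR A b + (a * powR B a)^-1 * powR B a = b^-1 + a^-1.
  by field; rewrite !gt_eqF ?powR_gt0.
by rewrite addrC ab mulr1.
Qed.

Lemma holder_conjugate_norming a b h : 0 < a -> 0 < b -> a^-1 + b^-1 = 1 ->
  exists g, cube_norm b%:E g <= 1 /\ expect (fun x => g x * h x) = cube_norm a%:E h.
Proof.
move=> a_gt0 b_gt0 ab.
have [B0|B0] := eqVneq (cube_norm a%:E h) 0.
  exists (fun _ => 0); rewrite cube_norm_cst // normr0 ler01 B0; split => //.
  by rewrite (eq_expect (g := fun _ => 0)) ?expect_cst // => x; rewrite mul0r.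
move: B0 (cube_normX h a_gt0); set B := cube_norm _ h => B0 hX.
have B_gt0 : 0 < B by rewrite lt_def B0 cube_norm_ge0.
clearbody B.
have a1b := subr1_mul_conjugate a_gt0 b_gt0 ab.
have BaN0 : powR B (a - 1) != 0 by rewrite gt_eqF // powR_gt0.
(* the extremal function of Hölder's inequality: sgn h |h|^(a-1), normalised *)
exists (fun x => Num.sg (h x) * powR `|h x| (a - 1) / powR B (a - 1)); split.
  have gX x : powR `|Num.sg (h x) * powR `|h x| (a - 1) / powR B (a - 1)| b =
      (powR B a)^-1 * powR `|h x| a.
    have [->|hx0] := eqVneq (h x) 0.
      by rewrite sgr0 !mul0r normr0 !powR0 ?mulr0 // gt_eqF.
    rewrite !normrM normfV normr_sg hx0 mul1r !(ger0_norm (powR_ge0 _ _)).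
    rewrite powRM ?invr_ge0 ?powR_ge0 // powRV ?powR_ge0 // -!powRrM a1b.
    by rewrite mulrC.
  rewrite /= (eq_expect gX) expectZ -hX mulVf ?gt_eqF ?powR_gt0 //.
  by rewrite powR1.
rewrite (eq_expect (g := fun x => (powR B (a - 1))^-1 * powR `|h x| a)).
  by rewrite expectZ -hX -(mulr_powRB1 (ltW B_gt0) a_gt0) mulrC mulfK.
move=> x; rewrite [_ * h x]mulrC !mulrA [h x * _]mulrC -normrEsg mulr_powRB1 //.
by rewrite mulrC.
Qed.

Lemma holder_oo_1 g h :
  expect (fun x => g x * h x) <= cube_norm +oo%E g * cube_norm 1%:E h.
Proof.
rewrite cube_norm1 -expectZ; apply: ler_expect => x.
by apply: le_trans (ler_norm _) _; rewrite normrM ler_wpM2r // cube_norm_oo_ub.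
Qed.

Lemma cube_norm1_norming h :
  exists g, cube_norm +oo%E g <= 1 /\ expect (fun x => g x * h x) = cube_norm 1%:E h.
Proof.
exists (fun x => Num.sg (h x)); split.
  by apply: bigmax_le => // x _; rewrite normr_sg; case: (_ != _).
by rewrite cube_norm1; apply: eq_expect => x; rewrite -normrEsg.
Qed.

Lemma cube_norm_oo_norming g :
  exists h, cube_norm 1%:E h <= 1 /\ expect (fun x => g x * h x) = cube_norm +oo%E g.
Proof.
pose x0 := [arg max_(i > [ffun=> false]) `|g i|]%O.
have gx0 : cube_norm +oo%E g = `|g x0|.
  by rewrite /= (bigmax_eq_arg 0 [ffun=> false]) // => i _; apply: normr_ge0.
have two_n_neq0 : (2 : R) ^+ n != 0 by rewrite gt_eqF // cube_size_gt0.
(* a point mass at a maximiser of |g|, normalised in L_1 *)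
exists (fun x => if x == x0 then 2 ^+ n * Num.sg (g x0) else 0); split.
  rewrite cube_norm1 /expect (bigD1 x0) //= big1 => [|x /negbTE ->]; last exact: normr0.
  rewrite eqxx addr0 normrM normr_sg ger0_norm ?exprn_ge0 // mulrAC mulfV // mul1r.
  by case: (_ != _).
rewrite gx0 /expect (bigD1 x0) //= big1 => [|x /negbTE ->]; last exact: mulr0.
by rewrite eqxx addr0 normrEsg; field.
Qed.

End Norms.

Section ConjugateNorms.
Variables (R : realType) (n : nat).
Implicit Types (g h u v : cube n -> R) (r : R).

Lemma holder r g h : 1 <= r ->
  expect (fun x => g x * h x) <= cube_norm (conj_exp r) g * cube_norm r%:E h.
Proof.
move=> /conj_expP[[-> ->]|[r_gt1 ->]]; first exact: holder_oo_1.
apply: le_trans (ler_expect (g := fun x => `|g x| * `|h x|) _) _.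
  by move=> x; rewrite -normrM ler_norm.
exact: holder_conjugate (lt_trans ltr01 r_gt1) (conj_exp_gt0 r_gt1) (conj_exp_inv r_gt1).
Qed.

Lemma cube_norm_norming r h : 1 <= r -> exists g,
  cube_norm (conj_exp r) g <= 1 /\ expect (fun x => g x * h x) = cube_norm r%:E h.
Proof.
move=> /conj_expP[[-> ->]|[r_gt1 ->]]; first exact: cube_norm1_norming.
exact: holder_conjugate_norming (lt_trans ltr01 r_gt1) (conj_exp_gt0 r_gt1)
  (conj_exp_inv r_gt1).
Qed.

Lemma conj_norm_norming r g : 1 <= r -> exists h,
  cube_norm r%:E h <= 1 /\ expect (fun x => g x * h x) = cube_norm (conj_exp r) g.
Proof.
move=> /conj_expP[[-> ->]|[r_gt1 ->]]; first exact: cube_norm_oo_norming.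
have := holder_conjugate_norming g (conj_exp_gt0 r_gt1) (lt_trans ltr01 r_gt1).
rewrite addrC conj_exp_inv // => /(_ erefl) [h [h1 hg]]; exists h; split => //.
by rewrite -hg; apply: eq_expect => x; rewrite mulrC.
Qed.

Lemma expect_le_conj_norm r g h : 1 <= r -> cube_norm r%:E h <= 1 ->
  expect (fun x => g x * h x) <= cube_norm (conj_exp r) g.
Proof.
move=> r1 h1; apply: le_trans (holder g h r1) _.
by rewrite -[X in _ <= X]mulr1 ler_wpM2l // cube_norm_ge0.
Qed.

Lemma conj_normD r u v : 1 <= r ->
  cube_norm (conj_exp r) (u + v) <= cube_norm (conj_exp r) u + cube_norm (conj_exp r) v.
Proof.
move=> r1; have [h [h1 <-]] := conj_norm_norming (u + v) r1.
rewrite (eq_expect (g := fun x => u x * h x + v x * h x)) => [|x]; last exact: mulrDl.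
by rewrite expectD; apply: lerD; apply: expect_le_conj_norm.
Qed.

Lemma conj_normZ r (c : R) u : 1 <= r -> 0 < c ->
  cube_norm (conj_exp r) (c *: u) = c * cube_norm (conj_exp r) u.
Proof.
move=> r1 c_gt0; apply/eqP; rewrite eq_le; apply/andP; split.
  have [h [h1 <-]] := conj_norm_norming (c *: u) r1.
  rewrite (eq_expect (g := fun x => c * (u x * h x))) => [|x]; last by rewrite mulrA.
  by rewrite expectZ; apply: ler_wpM2l; [exact: ltW | exact: expect_le_conj_norm].
have [h [h1 <-]] := conj_norm_norming u r1.
rewrite -expectZ (eq_expect (g := fun x => (c *: u) x * h x)) => [|x].
  exact: expect_le_conj_norm.
by rewrite mulrA.
Qed.

End ConjugateNorms.

Section Representation.
Variables (R : realType) (n : nat).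

Definition cube_delta (y : cube n) : cube n -> R := fun x => (x == y)%:R.

Lemma cube_delta_sum (u : cube n -> R) : \sum_y u y *: cube_delta y = u.
Proof.
apply: funext => x; rewrite fct_sumE /= (eq_bigr (fun y => u y * (x == y)%:R)) //.
rewrite (bigD1 x) //= big1 => [|y yx]; first by rewrite eqxx mulr1 addr0.
by rewrite eq_sym (negbTE yx) mulr0.
Qed.

Lemma spanning_cube_delta : spanning cube_delta.
Proof.
by move=> W SW Wdelta u; rewrite -(cube_delta_sum u); apply: subspace_sum.
Qed.

Lemma linear_functional_representation (psi : (cube n -> R) -> R) :
  (forall c u v, psi (c *: u + v) = c * psi u + psi v) ->
  exists h, forall g, expect (fun x => g x * h x) = psi g.
Proof.
move=> psi_lin; exists (fun y => 2 ^+ n * psi (cube_delta y)) => g.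
rewrite -{2}(cube_delta_sum g) linear_sum // /expect.
under eq_bigr do rewrite mulrCA.
by rewrite -mulr_sumr mulrC mulKf // gt_eqF // cube_size_gt0.
Qed.

End Representation.

Section DistanceToTail.
Variables (R : realType) (n k : nat).
Implicit Types (f h t : cube n -> R).

Lemma dist_tail_le (r : \bar R) f t : tail_space k t ->
  dist_tail r k f <= cube_norm r (fun x => f x - t x).
Proof.
move=> tt; apply: ge_inf; last by exists t.
by exists 0 => _ [g _ <-]; apply: cube_norm_ge0.
Qed.

Lemma dist_tail_ge (r : \bar R) f (a : R) :
  (forall t, tail_space k t -> a <= cube_norm r (fun x => f x - t x)) ->
  a <= dist_tail r k f.
Proof.
move=> a_lb; apply: lb_le_inf => [|_ [t tt <-]]; last exact: a_lb.
by exists (cube_norm r (fun x => f x - 0)), 0 => //; case: (tail_space_subspace R n k).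
Qed.

Lemma dist_tail_le_norm (r : \bar R) f : dist_tail r k f <= cube_norm r f.
Proof.
have [t0 _] := tail_space_subspace R n k.
apply: le_trans (dist_tail_le r f t0) _; rewrite le_eqVlt; apply/orP; left.
by apply/eqP; congr cube_norm; apply: funext => x; apply: subr0.
Qed.

Lemma dist_tail_ge0 (r : \bar R) f : 0 <= dist_tail r k f.
Proof. by apply: dist_tail_ge => t _; apply: cube_norm_ge0. Qed.

Lemma holder_dist_tail (r : R) f h : 1 <= r -> degree_le k h ->
  expect (fun x => f x * h x) <= dist_tail (conj_exp r) k f * cube_norm r%:E h.
Proof.
move=> r1 dh; have r_gt0 : 0 < r by apply: lt_le_trans r1.
have [h0|hN0] := eqVneq (cube_norm r%:E h) 0.
  rewrite h0 mulr0 (eq_expect (g := fun _ => 0)) ?expect_cst // => x.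
  by rewrite (cube_norm_eq0 r_gt0 h0) mulr0.
have h_gt0 : 0 < cube_norm r%:E h by rewrite lt_def hN0 cube_norm_ge0.
rewrite -ler_pdivrMr //; apply: dist_tail_ge => t tt; rewrite ler_pdivrMr //.
have -> : expect (fun x => f x * h x) = expect (fun x => (f x - t x) * h x).
  rewrite [RHS](eq_expect (g := fun x => f x * h x - h x * t x)) => [|x].
    by rewrite expectB (expect_degree_tailM dh tt) subr0.
  by rewrite mulrBl [t x * _]mulrC.
exact: holder.
Qed.

Lemma dist_tail_cst1_ge1 (r : R) :
  1 <= r -> 1 <= dist_tail (conj_exp r) k (fun _ : cube n => 1).
Proof.
move=> r1; have := holder_dist_tail (fun _ => 1) r1 (@degree_le_cst1 R n k).
by rewrite cube_norm_cst ?(lt_le_trans ltr01) // normr1 mulr1 expect_cst mulr1.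
Qed.

Lemma dist_tail_norming (p : R) f : 1 <= p -> exists h,
  [/\ degree_le k h, cube_norm p%:E h <= 1
    & expect (fun x => f x * h x) = dist_tail (conj_exp p) k f].
Proof.
move=> p1; pose rho := @cube_norm R n (conj_exp p).
have rhoD u v : rho (u + v) <= rho u + rho v by apply: conj_normD.
have rhoZ c u : 0 < c -> rho (c *: u) = c * rho u by apply: conj_normZ.
set d := dist_tail (conj_exp p) k f.
have dom0 : dominated_linear rho (@tail_space R k n) (fun=> 0).
  split; [exact: tail_space_subspace | | by move=> u _; apply: cube_norm_ge0].
  by move=> c u v _ _; rewrite mulr0 addr0.
(* domination of c f + t |-> c d, the candidate extension of 0 from the tail space *)
have bounds c w : tail_space k w -> 0 + c * d <= rho (c *: f + w).
  move=> tw; rewrite add0r; have [c_le0|c_gt0] := leP c 0.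
    by apply: le_trans (cube_norm_ge0 _ _); rewrite mulr_le0_ge0 // dist_tail_ge0.
  rewrite -(rhoZD rhoZ _ _ c_gt0) ler_pM2l //.
  have -> : f + c^-1 *: w = fun x => f x - (- c^-1) * w x.
    by apply: funext => x; rewrite mulNr opprK.
  exact/dist_tail_le/(subspaceZ _ (tail_space_subspace R n k) tw).
have [W1 [phi1 [dom1 ext1 W1f phi1f]]] := extension_step rhoZ dom0 bounds.
have [psi [psi_lin psi_rho psi_ext]] :=
  hahn_banach rhoD rhoZ (@spanning_cube_delta R n) dom1.
have psi_tail t : tail_space k t -> psi t = 0.
  by move=> tt; have [W1t <-] := ext1 t tt; apply: psi_ext.
have [h Eh] := linear_functional_representation psi_lin.
exists h; split.
- move=> S kS; rewrite /fourier (eq_expect (g := fun x => walsh R S x * h x)) => [|x].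
    by rewrite Eh psi_tail //; apply: tail_space_walsh.
  exact: mulrC.
- have [g [g1 <-]] := cube_norm_norming h p1.
  by rewrite Eh; apply: le_trans (psi_rho g) g1.
- by rewrite Eh psi_ext.
Qed.

End DistanceToTail.

Section Duality.
Variables (R : realType) (n k : nat) (p q : R).
Hypotheses (p1 : 1 <= p) (q1 : 1 <= q).

Lemma dist_tail_ineq_of_degree_ineq (C : R) :
  (forall h : cube n -> R, degree_le k h -> cube_norm q%:E h <= C * cube_norm p%:E h) ->
  forall f : cube n -> R, dist_tail (conj_exp p) k f <= C * dist_tail (conj_exp q) k f.
Proof.
move=> Cpq f; have C_ge1 : 1 <= C.
  have := Cpq _ (@degree_le_cst1 R n k).
  by rewrite !cube_norm_cst ?(lt_le_trans ltr01) // normr1 mulr1.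
have [h [dh h1 <-]] := dist_tail_norming k f p1.
apply: le_trans (holder_dist_tail f q1 dh) _; rewrite mulrC.
apply: ler_wpM2r; first exact: dist_tail_ge0.
apply: le_trans (Cpq h dh) _.
by rewrite -[X in _ <= X]mulr1 ler_wpM2l // (le_trans ler01).
Qed.

Lemma degree_ineq_of_dist_tail_ineq (C : R) :
  (forall f : cube n -> R,
     dist_tail (conj_exp p) k f <= C * dist_tail (conj_exp q) k f) ->
  forall h : cube n -> R, degree_le k h -> cube_norm q%:E h <= C * cube_norm p%:E h.
Proof.
move=> Cpq h dh; have C_ge0 : 0 <= C.
  have := le_trans (dist_tail_cst1_ge1 n k p1) (Cpq _).
  by have := @dist_tail_ge0 R n k (conj_exp q) (fun=> 1) => ? ?; nra.
have [g [g1 <-]] := cube_norm_norming h q1.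
apply: le_trans (holder_dist_tail g p1 dh) _; rewrite ler_wpM2r ?cube_norm_ge0 //.
apply: le_trans (Cpq g) _; rewrite -[X in _ <= X]mulr1 ler_wpM2l //.
exact: le_trans (dist_tail_le_norm k _ _) g1.
Qed.

End Duality.

Lemma eq_is_least_const (R : realType) (P Q : R -> Prop) (M : R) :
  (forall C, P C <-> Q C) -> is_least_const P M <-> is_least_const Q M.
Proof.
by move=> PQ; split=> -[XM Xmin]; split=> [|C /PQ]; by [apply/PQ | apply: Xmin].
Qed.

Unset Implicit Arguments.

Theorem proposition1p1 (R : realType) (p q : R) (k : nat) :
  1 <= p -> p <= q ->
  forall M : R,
    is_least_const
      (fun C : R => forall n : nat, (k <= n)%N ->
         forall f : cube n -> R, degree_le k f ->
           cube_norm q%:E f <= C * cube_norm p%:E f) M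
    <->
    is_least_const
      (fun C : R => forall n : nat, (k <= n)%N ->
         forall f : cube n -> R,
           dist_tail (conj_exp p) k f <= C * dist_tail (conj_exp q) k f) M.
Proof.
move=> p1 pq M; have q1 := le_trans p1 pq.
apply: eq_is_least_const => C; split => Cpq n kn.
- exact: (dist_tail_ineq_of_degree_ineq p1 q1 (Cpq n kn)).
- exact: (degree_ineq_of_dist_tail_ineq p1 q1 (Cpq n kn)).
Qed.
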